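(* For any $\Gamma\vdash t:A$ and $\Gamma\vdash u:A$ in the full simply-typed $\lambda$-calculus, if $t\approx_{ctx}u$ then $t\approx_{sem}u$.
   Context: Types: $A,B ::= X \mid A\to B \mid A_1\times A_2 \mid 1 \mid A_1+A_2 \mid 0$ ($X$ atomic). Terms: $x \mid \lambda x.t \mid t\,u \mid (t_1,t_2) \mid \pi_i t \mid () \mid \sigma_i t \mid \mathtt{match}\ t\ \mathtt{with}\ (\sigma_1 x_1\to u_1 \mid \sigma_2 x_2\to u_2) \mid \mathtt{absurd}(t)$ with standard simple typing; $\mathtt{absurd}(t):A$ for any $A$ when $t:0$. $\beta$-equivalence $\equiv_\beta$ is the congruence generated by $(\lambda x.t)u\equiv t[u/x]$, $\pi_i(t_1,t_2)\equiv t_i$, $\mathtt{match}\ \sigma_jt\ \mathtt{with}\ (\sigma_ix_i\to u_i)_i\equiv u_j[t/x_j]$. A closed type contains no atoms; a model $M$ maps atoms to closed types and $M(\cdot)$ substitutes. Contextual equivalence: $t\approx_{ctx}u$ iff for every model $M$ and every one-hole context $C$ with $\emptyset\vdash C[M(\Gamma)\vdash\square:M(A)]:1+1$, $C[M(t)]\equiv_\beta C[M(u)]$. Semantics: closed types denote sets ($[\![A\to B]\!]$ total functions, $[\![A\times B]\!]$ product, $[\![1]\!]=\{\star\}$, $[\![A+B]\!]=\{(1,a)\}\uplus\{(2,b)\}$, $[\![0]\!]=\emptyset$), $[\![A]\!]_M=[\![M(A)]\!]$, valuations $\rho\in[\![\Gamma]\!]_M$ map each $x:A\in\Gamma$ into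 $[\![A]\!]_M$, and $[\![t]\!]_M:[\![\Gamma]\!]_M\to[\![A]\!]_M$ is the standard set-theoretic interpretation. Semantic equivalence: $t\approx_{sem}u$ iff for all models $M$ and all $\rho\in[\![\Gamma]\!]_M$, $[\![t]\!]_M(\rho)=[\![u]\!]_M(\rho)$. *)

From Stdlib Require Import List.
Import ListNotations.
Set Implicit Arguments.

Inductive ty : Type :=
| tatom : nat -> ty
| tarr : ty -> ty -> ty
| tprod : ty -> ty -> ty
| tunit : ty
| tsum : ty -> ty -> ty
| tempty : ty.

Definition tctx := list ty.

Inductive var : tctx -> ty -> Type :=
| vz : forall G A, var (A :: G) A
| vs : forall G A B, var G A -> var (B :: G) A.

Inductive tm : tctx -> ty -> Type :=
| tvar : forall G A, var G A -> tm G A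
| tlam : forall G A B, tm (A :: G) B -> tm G (tarr A B)
| tapp : forall G A B, tm G (tarr A B) -> tm G A -> tm G B
| tpair : forall G A B, tm G A -> tm G B -> tm G (tprod A B)
| tproj1 : forall G A B, tm G (tprod A B) -> tm G A
| tproj2 : forall G A B, tm G (tprod A B) -> tm G B
| ttt : forall G, tm G tunit
| tinl : forall G A B, tm G A -> tm G (tsum A B)
| tinr : forall G A B, tm G B -> tm G (tsum A B)
| tcase : forall G A B C, tm G (tsum A B) -> tm (A :: G) C -> tm (B :: G) C -> tm G C
| tabsurd : forall G C, tm G tempty -> tm G C.

Definition rlift {G D B} (r : forall A, var G A -> var D A) : forall A, var (B :: G) A -> var (B :: D) A :=
  fun A v =>
    match v in var L A' return
      (match L with nil => unit | B' :: G' => (forall A, var G' A -> var D A) -> var (B' :: D) A' end)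
    with
    | @vz _ _ => fun _ => vz _ _
    | @vs _ _ _ v' => fun r => vs _ (r _ v')
    end r.

Fixpoint ren {G A} (t : tm G A) {struct t} : forall D, (forall B, var G B -> var D B) -> tm D A :=
  match t in tm G A return forall D, (forall B, var G B -> var D B) -> tm D A with
  | tvar v => fun D r => tvar (r _ v)
  | tlam t => fun D r => tlam (ren t (rlift r))
  | tapp t u => fun D r => tapp (ren t r) (ren u r)
  | tpair t u => fun D r => tpair (ren t r) (ren u r)
  | tproj1 t => fun D r => tproj1 (ren t r)
  | tproj2 t => fun D r => tproj2 (ren t r)
  | ttt _ => fun D r => ttt D
  | tinl _ t => fun D r => tinl _ (ren t r)
  | tinr _ t => fun D r => tinr _ (ren t r)
  | tcase s t1 t2 => fun D r => tcase (ren s r) (ren t1 (rlift r)) (ren t2 (rlift r))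
  | tabsurd _ s => fun D r => tabsurd _ (ren s r)
  end.

Definition wk {G A B} (t : tm G A) : tm (B :: G) A := ren t (fun _ v => vs B v).

Definition slift {G D B} (s : forall A, var G A -> tm D A) : forall A, var (B :: G) A -> tm (B :: D) A :=
  fun A v =>
    match v in var L A' return
      (match L with nil => unit | B' :: G' => (forall A, var G' A -> tm D A) -> tm (B' :: D) A' end)
    with
    | @vz _ _ => fun _ => tvar (vz _ _)
    | @vs _ _ _ v' => fun s => wk (s _ v')
    end s.

Fixpoint sub {G A} (t : tm G A) {struct t} : forall D, (forall B, var G B -> tm D B) -> tm D A :=
  match t in tm G A return forall D, (forall B, var G B -> tm D B) -> tm D A with
  | tvar v => fun D s => s _ v
  | tlam t => fun D s => tlam (sub t (slift s))
  | tapp t u => fun D s => tapp (sub t s) (sub u s)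
  | tpair t u => fun D s => tpair (sub t s) (sub u s)
  | tproj1 t => fun D s => tproj1 (sub t s)
  | tproj2 t => fun D s => tproj2 (sub t s)
  | ttt _ => fun D s => ttt D
  | tinl _ t => fun D s => tinl _ (sub t s)
  | tinr _ t => fun D s => tinr _ (sub t s)
  | tcase c t1 t2 => fun D s => tcase (sub c s) (sub t1 (slift s)) (sub t2 (slift s))
  | tabsurd _ c => fun D s => tabsurd _ (sub c s)
  end.

Definition subst1_sub {G B} (u : tm G B) : forall A, var (B :: G) A -> tm G A :=
  fun A v =>
    match v in var L A' return
      (match L with nil => unit | B' :: G' => tm G' B' -> tm G' A' end)
    with
    | @vz _ _ => fun u => u
    | @vs _ _ _ v' => fun _ => tvar v'
    end u.

Definition subst1 {G A B} (t : tm (B :: G) A) (u : tm G B) : tm G A :=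
  sub t (subst1_sub u).

Inductive beq : forall G A, tm G A -> tm G A -> Prop :=
| beq_refl : forall G A (t : tm G A), beq t t
| beq_sym : forall G A (t u : tm G A), beq t u -> beq u t
| beq_trans : forall G A (t u v : tm G A), beq t u -> beq u v -> beq t v
| beq_lam : forall G A B (t t' : tm (A :: G) B), beq t t' -> beq (tlam t) (tlam t')
| beq_app : forall G A B (t t' : tm G (tarr A B)) (u u' : tm G A),
    beq t t' -> beq u u' -> beq (tapp t u) (tapp t' u')
| beq_pair : forall G A B (t t' : tm G A) (u u' : tm G B),
    beq t t' -> beq u u' -> beq (tpair t u) (tpair t' u')
| beq_proj1 : forall G A B (t t' : tm G (tprod A B)), beq t t' -> beq (tproj1 t) (tproj1 t')
| beq_proj2 : forall G A B (t t' : tm G (tprod A B)), beq t t' -> beq (tproj2 t) (tproj2 t')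
| beq_inl : forall G A B (t t' : tm G A), beq t t' -> beq (tinl B t) (tinl B t')
| beq_inr : forall G A B (t t' : tm G B), beq t t' -> beq (tinr A t) (tinr A t')
| beq_case : forall G A B C (s s' : tm G (tsum A B)) (t1 t1' : tm (A :: G) C) (t2 t2' : tm (B :: G) C),
    beq s s' -> beq t1 t1' -> beq t2 t2' -> beq (tcase s t1 t2) (tcase s' t1' t2')
| beq_absurd : forall G C (s s' : tm G tempty), beq s s' -> beq (tabsurd C s) (tabsurd C s')
| beq_beta_lam : forall G A B (t : tm (A :: G) B) (u : tm G A),
    beq (tapp (tlam t) u) (subst1 t u)
| beq_beta_proj1 : forall G A B (t1 : tm G A) (t2 : tm G B), beq (tproj1 (tpair t1 t2)) t1
| beq_beta_proj2 : forall G A B (t1 : tm G A) (t2 : tm G B), beq (tproj2 (tpair t1 t2)) t2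
| beq_beta_inl : forall G A B C (t : tm G A) (u1 : tm (A :: G) C) (u2 : tm (B :: G) C),
    beq (tcase (tinl B t) u1 u2) (subst1 u1 t)
| beq_beta_inr : forall G A B C (t : tm G B) (u1 : tm (A :: G) C) (u2 : tm (B :: G) C),
    beq (tcase (tinr A t) u1 u2) (subst1 u2 t).

(* ---------- one-hole contexts C[H |- [] : K] : (D |- _ : B) ---------- *)
Inductive hctx (H : tctx) (K : ty) : tctx -> ty -> Type :=
| chole : hctx H K H K
| clam : forall G A B, hctx H K (A :: G) B -> hctx H K G (tarr A B)
| cappl : forall G A B, hctx H K G (tarr A B) -> tm G A -> hctx H K G B
| cappr : forall G A B, tm G (tarr A B) -> hctx H K G A -> hctx H K G B
| cpairl : forall G A B, hctx H K G A -> tm G B -> hctx H K G (tprod A B)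
| cpairr : forall G A B, tm G A -> hctx H K G B -> hctx H K G (tprod A B)
| cproj1 : forall G A B, hctx H K G (tprod A B) -> hctx H K G A
| cproj2 : forall G A B, hctx H K G (tprod A B) -> hctx H K G B
| cinl : forall G A B, hctx H K G A -> hctx H K G (tsum A B)
| cinr : forall G A B, hctx H K G B -> hctx H K G (tsum A B)
| ccase0 : forall G A B C, hctx H K G (tsum A B) -> tm (A :: G) C -> tm (B :: G) C -> hctx H K G C
| ccase1 : forall G A B C, tm G (tsum A B) -> hctx H K (A :: G) C -> tm (B :: G) C -> hctx H K G C
| ccase2 : forall G A B C, tm G (tsum A B) -> tm (A :: G) C -> hctx H K (B :: G) C -> hctx H K G C
| cabsurd : forall G C, hctx H K G tempty -> hctx H K G C.

Fixpoint plug {H K G A} (c : hctx H K G A) (t : tm H K) {struct c} : tm G A :=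
  match c in hctx _ _ G A return tm G A with
  | chole _ _ => t
  | clam c => tlam (plug c t)
  | cappl c u => tapp (plug c t) u
  | cappr u c => tapp u (plug c t)
  | cpairl c u => tpair (plug c t) u
  | cpairr u c => tpair u (plug c t)
  | cproj1 c => tproj1 (plug c t)
  | cproj2 c => tproj2 (plug c t)
  | cinl _ c => tinl _ (plug c t)
  | cinr _ c => tinr _ (plug c t)
  | ccase0 c u1 u2 => tcase (plug c t) u1 u2
  | ccase1 s c u2 => tcase s (plug c t) u2
  | ccase2 s u1 c => tcase s u1 (plug c t)
  | cabsurd _ c => tabsurd _ (plug c t)
  end.

Inductive cty : Type :=
| carr : cty -> cty -> cty
| cprod : cty -> cty -> cty
| cunit : cty
| csum : cty -> cty -> cty
| cempty : cty.

Fixpoint emb (c : cty) : ty :=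
  match c with
  | carr a b => tarr (emb a) (emb b)
  | cprod a b => tprod (emb a) (emb b)
  | cunit => tunit
  | csum a b => tsum (emb a) (emb b)
  | cempty => tempty
  end.

Definition model := nat -> cty.

Fixpoint tinst (M : model) (A : ty) : cty :=
  match A with
  | tatom n => M n
  | tarr A B => carr (tinst M A) (tinst M B)
  | tprod A B => cprod (tinst M A) (tinst M B)
  | tunit => cunit
  | tsum A B => csum (tinst M A) (tinst M B)
  | tempty => cempty
  end.

Definition mty (M : model) (A : ty) : ty := emb (tinst M A).

Fixpoint mvar (M : model) {G A} (v : var G A) : var (map (mty M) G) (mty M A) :=
  match v in var G A return var (map (mty M) G) (mty M A) with
  | vz G A => vz _ _
  | vs B v => vs _ (mvar M v)
  end.

Fixpoint mtm (M : model) {G A} (t : tm G A) : tm (map (mty M) G) (mty M A) :=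
  match t in tm G A return tm (map (mty M) G) (mty M A) with
  | tvar v => tvar (mvar M v)
  | tlam t => tlam (mtm M t)
  | tapp t u => tapp (mtm M t) (mtm M u)
  | tpair t u => tpair (mtm M t) (mtm M u)
  | tproj1 t => tproj1 (mtm M t)
  | tproj2 t => tproj2 (mtm M t)
  | ttt _ => ttt _
  | tinl _ t => tinl _ (mtm M t)
  | tinr _ t => tinr _ (mtm M t)
  | tcase s t1 t2 => tcase (mtm M s) (mtm M t1) (mtm M t2)
  | tabsurd _ s => tabsurd _ (mtm M s)
  end.

Definition tbool : ty := tsum tunit tunit.

Definition ctx_equiv {G A} (t u : tm G A) : Prop :=
  forall (M : model) (C : hctx (map (mty M) G) (mty M A) nil tbool),
    beq (plug C (mtm M t)) (plug C (mtm M u)).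

Fixpoint csem (c : cty) : Type :=
  match c with
  | carr a b => csem a -> csem b
  | cprod a b => (csem a * csem b)%type
  | cunit => unit
  | csum a b => (csem a + csem b)%type
  | cempty => Empty_set
  end.

Definition tsem (M : model) (A : ty) : Type := csem (tinst M A).

Definition valuation (M : model) (G : tctx) : Type := forall A, var G A -> tsem M A.

Definition vext {M G A} (rho : valuation M G) (x : tsem M A) : valuation M (A :: G) :=
  fun B v =>
    match v in var L B' return
      (match L with nil => unit | A' :: G' => tsem M A' -> valuation M G' -> tsem M B' end)
    with
    | @vz _ _ => fun x _ => x
    | @vs _ _ _ v' => fun _ rho => rho _ v'
    end x rho.

Fixpoint eval (M : model) {G A} (t : tm G A) {struct t} : valuation M G -> tsem M A :=
  match t in tm G A return valuation M G -> tsem M A with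
  | tvar v => fun rho => rho _ v
  | tlam t => fun rho => fun x => @eval M _ _ t (vext rho x)
  | tapp t u => fun rho => (@eval M _ _ t rho) (@eval M _ _ u rho)
  | tpair t u => fun rho => (@eval M _ _ t rho, @eval M _ _ u rho)
  | tproj1 t => fun rho => fst (@eval M _ _ t rho)
  | tproj2 t => fun rho => snd (@eval M _ _ t rho)
  | ttt _ => fun rho => tt
  | tinl _ t => fun rho => inl (@eval M _ _ t rho)
  | tinr _ t => fun rho => inr (@eval M _ _ t rho)
  | tcase s t1 t2 => fun rho =>
      match @eval M _ _ s rho with
      | inl a => @eval M _ _ t1 (vext rho a)
      | inr b => @eval M _ _ t2 (vext rho b)
      end
  | tabsurd C s => fun rho => match @eval M _ _ s rho return tsem M C with end
  end.

Arguments eval M {G A} t rho.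

Definition sem_equiv {G A} (t u : tm G A) : Prop :=
  forall (M : model) (rho : valuation M G), eval M t rho = eval M u rho.

(** β-equivalent terms have equal denotations in every model.  Conversely, closed types
    denote finite sets, and in the full calculus every element [x] of such a set is
    definable by a term, as is its test [y ↦ (y = x)]: at function types one branches on
    the tests of the finitely many arguments, falling back on the empty type when there
    are none.  Given [t ≈ctx u], [M] and [ρ], take the context that applies the test of
    [[t]]ρ to the hole and binds the free variables to definitions of their values
    under [ρ].  By soundness it returns the same boolean on [M(t)] and [M(u)]; it returns
    true on [M(t)], hence [[u]]ρ = [[t]]ρ. *)

From Stdlib Require Import List FunctionalExtensionality Classical ClassicalEpsilon FinFun.
Import ListNotations.

Lemma var_cons_ind {G A} (P : forall B, var (A :: G) B -> Prop) :
  P A (vz G A) -> (forall B (v : var G B), P B (vs A v)) -> forall B v, P B v.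
Proof.
  intros Hz Hs B v.
  refine (match v as v' in var L B' return
            match L return var L B' -> Prop with
            | nil => fun _ => True
            | A' :: G' => fun v' => forall P : forall B, var (A' :: G') B -> Prop,
                P A' (vz G' A') -> (forall B (w : var G' B), P B (vs A' w)) -> P B' v'
            end v'
          with vz _ _ => fun P Hz _ => Hz | vs _ w => fun P _ Hs => Hs _ w end P Hz Hs).
Qed.

Lemma var_nil_elim {B} (v : var nil B) : False.
Proof. inversion v. Qed.

Section Soundness.

Variable M : model.

Lemma eval_ext {G A} (t : tm G A) (rho rho' : valuation M G) :
  (forall B v, rho B v = rho' B v) -> eval M t rho = eval M t rho'.
Proof.
  intro Hrho. replace rho' with rho; [reflexivity|].
  do 2 (apply functional_extensionality_dep; intro). apply Hrho.
Qed.

Lemma eval_ren {G A} (t : tm G A) :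
  forall D (r : forall B, var G B -> var D B) (rho : valuation M D),
  eval M (ren t r) rho = eval M t (fun B v => rho B (r B v)).
Proof.
  induction t; intros D r rho; simpl; rewrite ?IHt, ?IHt1, ?IHt2; try reflexivity.
  - apply functional_extensionality; intro x. rewrite IHt.
    apply eval_ext, var_cons_ind; reflexivity.
  - destruct (eval M t1 _); [rewrite IHt2 | rewrite IHt3];
      apply eval_ext, var_cons_ind; reflexivity.
Qed.

Lemma eval_wk {G A B} (t : tm G A) (rho : valuation M G) (x : tsem M B) :
  eval M (wk t) (vext rho x) = eval M t rho.
Proof. apply eval_ren. Qed.

Lemma eval_sub {G A} (t : tm G A) :
  forall D (s : forall B, var G B -> tm D B) (rho : valuation M D),
  eval M (sub t s) rho = eval M t (fun B v => eval M (s B v) rho).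
Proof.
  induction t; intros D s rho; simpl; rewrite ?IHt, ?IHt1, ?IHt2; try reflexivity.
  - apply functional_extensionality; intro x. rewrite IHt.
    apply eval_ext, var_cons_ind; [reflexivity | intros; apply eval_wk].
  - destruct (eval M t1 _); [rewrite IHt2 | rewrite IHt3];
      apply eval_ext, var_cons_ind; try reflexivity; intros; apply eval_wk.
Qed.

Lemma eval_subst1 {G A B} (t : tm (B :: G) A) (u : tm G B) (rho : valuation M G) :
  eval M (subst1 t u) rho = eval M t (vext rho (eval M u rho)).
Proof. unfold subst1. rewrite eval_sub. apply eval_ext, var_cons_ind; reflexivity. Qed.

End Soundness.

Lemma beq_sound {G A} {t u : tm G A} :
  beq t u -> forall M (rho : valuation M G), eval M t rho = eval M u rho.
Proof.
  induction 1; intros M rho; simpl; rewrite ?eval_subst1; try congruence.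
  - apply functional_extensionality; intro x. apply IHbeq.
  - rewrite IHbeq1. destruct (eval M s' rho); auto.
  - destruct (eval M s rho).
Qed.

Definition ttrue G : tm G tbool := tinl tunit (ttt G).
Definition tfalse G : tm G tbool := tinr tunit (ttt G).
Definition tif {G C} (b : tm G tbool) (t e : tm G C) : tm G C := tcase b (wk t) (wk e).
Definition tand {G} (b1 b2 : tm G tbool) : tm G tbool := tif b1 b2 (tfalse G).

Lemma eval_tif M {G C} (b : tm G tbool) (t e : tm G C) (rho : valuation M G) :
  eval M (tif b t e) rho =
  match eval M b rho with inl _ => eval M t rho | inr _ => eval M e rho end.
Proof. unfold tif, tbool in *. simpl. destruct (eval M b rho); apply eval_wk. Qed.

Lemma eval_tand_true M {G} (b1 b2 : tm G tbool) (rho : valuation M G) :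
  eval M (tand b1 b2) rho = inl tt <-> eval M b1 rho = inl tt /\ eval M b2 rho = inl tt.
Proof.
  unfold tand. rewrite eval_tif.
  destruct (eval M b1 rho) as [[]|[]]; simpl; intuition discriminate.
Qed.

Definition update {X Y} (g : X -> Y) (a : X) (b : Y) : X -> Y :=
  fun x => if excluded_middle_informative (x = a) then b else g x.

Lemma functions_on_list {X Y} (la : list X) (lb : list Y) : Full lb ->
  exists lf : list (X -> Y), forall f, exists g, In g lf /\ forall x, In x la -> g x = f x.
Proof.
  intro Hb. induction la as [|a la [lf Hlf]].
  - destruct (classic (inhabited (X -> Y))) as [[f0]|Hno].
    + exists [f0]. intro f. exists f0. split; [left; reflexivity | intros x []].
    + exists []. intro f. exfalso. exact (Hno (inhabits f)).
  - exists (flat_map (fun g => map (update g a) lb) lf). intro f.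
    destruct (Hlf f) as [g [Hg Hgf]]. exists (update g a (f a)). split.
    + apply in_flat_map. exists g. split; [exact Hg | apply in_map, Hb].
    + intros x Hx. unfold update.
      destruct (excluded_middle_informative (x = a)) as [->|Hxa]; [reflexivity|].
      destruct Hx as [<-|Hx]; [congruence | auto].
Qed.

Lemma Finite_arrow X Y : Finite X -> Finite Y -> Finite (X -> Y).
Proof.
  intros [la Ha] [lb Hb]. destruct (functions_on_list la lb Hb) as [lf Hlf].
  exists lf. intro f. destruct (Hlf f) as [g [Hg Hgf]].
  replace f with g; [exact Hg|]. apply functional_extensionality; auto.
Qed.

Lemma Finite_prod X Y : Finite X -> Finite Y -> Finite (X * Y).
Proof. intros [la Ha] [lb Hb]. exists (list_prod la lb). intros [x y]. apply in_prod; auto. Qed.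

Lemma Finite_sum X Y : Finite X -> Finite Y -> Finite (X + Y).
Proof.
  intros [la Ha] [lb Hb]. exists (map inl la ++ map inr lb).
  intros [x|y]; apply in_app_iff; [left | right]; apply in_map; auto.
Qed.

Lemma csem_finite c : Finite (csem c).
Proof.
  induction c; simpl.
  - apply Finite_arrow; assumption.
  - apply Finite_prod; assumption.
  - exists [tt]. intros []. left; reflexivity.
  - apply Finite_sum; assumption.
  - exists []. intros [].
Qed.

Section Reembedding.

Variable N : model.

(* [tinst N (emb c)] is [c] only propositionally, so the denotation of [M(A)] in a model
   is related to [csem (tinst M A)] by this bijection rather than by conversion. *)
Fixpoint decode (c : cty) : tsem N (emb c) -> csem c :=
  match c return tsem N (emb c) -> csem c with
  | carr a b => fun f x => decode b (f (encode a x))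
  | cprod a b => fun p => (decode a (fst p), decode b (snd p))
  | cunit => fun x => x
  | csum a b => fun s => match s with inl x => inl (decode a x) | inr y => inr (decode b y) end
  | cempty => fun x => x
  end
with encode (c : cty) : csem c -> tsem N (emb c) :=
  match c return csem c -> tsem N (emb c) with
  | carr a b => fun f x => encode b (f (decode a x))
  | cprod a b => fun p => (encode a (fst p), encode b (snd p))
  | cunit => fun x => x
  | csum a b => fun s => match s with inl x => inl (encode a x) | inr y => inr (encode b y) end
  | cempty => fun x => x
  end.

Lemma decode_encode_inverse c :
  (forall x, decode c (encode c x) = x) /\ (forall y, encode c (decode c y) = y).
Proof.
  induction c as [a [Ha Ha'] b [Hb Hb'] | a [Ha Ha'] b [Hb Hb'] | | a [Ha Ha'] b [Hb Hb'] |];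
    split; intro x; simpl; try reflexivity.
  - apply functional_extensionality; intro y. rewrite Ha, Hb. reflexivity.
  - apply functional_extensionality; intro y. rewrite Ha', Hb'. reflexivity.
  - rewrite Ha, Hb. destruct x; reflexivity.
  - rewrite Ha', Hb'. destruct x; reflexivity.
  - destruct x; rewrite ?Ha, ?Hb; reflexivity.
  - destruct x; rewrite ?Ha', ?Hb'; reflexivity.
Qed.

Lemma decode_encode c x : decode c (encode c x) = x.
Proof. apply decode_encode_inverse. Qed.

Lemma encode_decode c y : encode c (decode c y) = y.
Proof. apply decode_encode_inverse. Qed.

Definition encodes {M G} (rho : valuation M G) (rho' : valuation N (map (mty M) G)) : Prop :=
  forall B (v : var G B), rho' _ (mvar M v) = encode (tinst M B) (rho B v).

Lemma encodes_vext {M G A} (rho : valuation M G) rho' (x : tsem M A) :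
  encodes rho rho' -> encodes (vext rho x) (vext rho' (encode (tinst M A) x)).
Proof. intro H. red. apply var_cons_ind; [reflexivity | apply H]. Qed.

Lemma eval_mtm {M G A} (t : tm G A) (rho : valuation M G) rho' :
  encodes rho rho' -> eval N (mtm M t) rho' = encode (tinst M A) (eval M t rho).
Proof.
  (* The type indices of [mtm M t1] are [mty M _] only up to conversion, so the induction
     hypotheses are applied through conversion rather than by [rewrite]. *)
  revert rho rho'. induction t; intros rho rho' H; cbn [mtm eval].
  - apply H.
  - apply functional_extensionality; intro y. simpl.
    rewrite <- (encode_decode _ y) at 1. apply IHt, encodes_vext, H.
  - etransitivity; [exact (f_equal2 (fun f x => f x) (IHt1 rho rho' H) (IHt2 rho rho' H))|].
    simpl. rewrite decode_encode. reflexivity.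
  - rewrite (IHt1 rho rho' H), (IHt2 rho rho' H). reflexivity.
  - exact (f_equal fst (IHt rho rho' H)).
  - exact (f_equal snd (IHt rho rho' H)).
  - reflexivity.
  - rewrite (IHt rho rho' H). reflexivity.
  - rewrite (IHt rho rho' H). reflexivity.
  - match goal with |- context [match ?s with inl _ => _ | inr _ => _ end] =>
      replace s with (encode (tinst M (tsum A B)) (eval M t1 rho)) by (symmetry; apply IHt1, H)
    end.
    simpl. destruct (eval M t1 rho); [apply IHt2 | apply IHt3]; apply encodes_vext, H.
  - destruct (eval M t rho).
Qed.

Lemma test_separates {c} {x x' : csem c} (f : tsem N (tarr (emb c) tbool)) :
  (forall y, f y = inl tt <-> decode c y = x) ->
  f (encode c x') = f (encode c x) -> x' = x.
Proof.
  intros Hf E. rewrite <- (decode_encode c x'). apply Hf.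
  rewrite E. apply Hf, decode_encode.
Qed.

End Reembedding.

Section Definability.

Variable N : model.

Definition definable c := forall (x : csem c) G, exists d : tm G (emb c),
  forall rho : valuation N G, eval N d rho = encode N c x.

Definition testable c := forall (x : csem c) G, exists e : tm G (tarr (emb c) tbool),
  forall (rho : valuation N G) (y : tsem N (emb c)),
  eval N e rho y = inl tt <-> decode N c y = x.

Definition absurd_definable c :=
  (csem c -> False) -> forall G, tm G (emb c) -> inhabited (tm G tempty).

Section Arrow.

Variables a b : cty.

Lemma case_split_definable (Ta : testable a) (Db : definable b) (f : csem a -> csem b) :
  forall l x0 D (s : tm D (emb a)), exists d : tm D (emb b), forall rho,
  In (decode N a (eval N s rho)) (x0 :: l) ->
  eval N d rho = encode N b (f (decode N a (eval N s rho))).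
Proof.
  induction l as [|x1 l IH]; intros x0 D s.
  - destruct (Db (f x0) D) as [d Hd]. exists d. intros rho [<-|[]]. apply Hd.
  - destruct (Ta x0 D) as [e He], (Db (f x0) D) as [d Hd], (IH x1 D s) as [d' Hd'].
    exists (tif (tapp e s) d d'). intros rho Hin. rewrite eval_tif. simpl.
    specialize (He rho (eval N s rho)).
    destruct (eval N e rho (eval N s rho)) as [[]|[]].
    + rewrite Hd. f_equal. f_equal. symmetry. apply He. reflexivity.
    + apply Hd'. destruct Hin as [Hx|Hin]; [|exact Hin].
      symmetry in Hx. apply He in Hx. discriminate.
Qed.

Lemma definable_arr :
  Finite (csem a) -> testable a -> absurd_definable a -> definable b -> definable (carr a b).
Proof.
  intros [la Hla] Ta Ea Db f G. destruct la as [|x0 l].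
  - assert (Hna : csem a -> False) by exact Hla.
    destruct (Ea Hna (emb a :: G) (tvar (vz G (emb a)))) as [z].
    exists (tlam (tabsurd _ z)). intro rho.
    apply functional_extensionality; intro y. destruct (Hna (decode N a y)).
  - destruct (case_split_definable Ta Db f l x0 _ (tvar (vz G (emb a)))) as [d Hd].
    exists (tlam d). intro rho. apply functional_extensionality; intro y.
    exact (Hd (vext rho y) (Hla _)).
Qed.

Lemma conjunction_testable (Da : definable a) (Tb : testable b) (f : csem a -> csem b) :
  forall l D (s : tm D (emb (carr a b))), exists e : tm D tbool, forall rho,
  eval N e rho = inl tt <-> forall x, In x l -> decode N b (eval N s rho (encode N a x)) = f x.
Proof.
  induction l as [|x l IH]; intros D s.
  - exists (ttrue D). intro rho. split; [intros _ x []|reflexivity].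
  - destruct (Da x D) as [d Hd], (Tb (f x) D) as [e He], (IH D s) as [e' He'].
    exists (tand (tapp e (tapp s d)) e'). intro rho.
    rewrite eval_tand_true, He'. simpl. rewrite He, Hd. split.
    + intros [Hx Hl] y [<-|Hy]; auto.
    + intros Hl. split; [apply Hl | intros y Hy; apply Hl]; simpl; auto.
Qed.

Lemma testable_arr : Finite (csem a) -> definable a -> testable b -> testable (carr a b).
Proof.
  intros [la Hla] Da Tb f G.
  destruct (conjunction_testable Da Tb f la _ (tvar (vz G (emb (carr a b))))) as [e He].
  exists (tlam e). intros rho y. cbn [eval]. rewrite (He (vext rho y)). simpl. split.
  - intro Hy. apply functional_extensionality; intro x. apply Hy, Hla.
  - intros <- x _. reflexivity.
Qed.

Lemma absurd_definable_arr : definable a -> absurd_definable b -> absurd_definable (carr a b).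
Proof.
  intros Da Eb Hn G s. destruct (classic (inhabited (csem a))) as [[x]|Hna].
  - destruct (Da x G) as [d _]. exact (Eb (fun y => Hn (fun _ => y)) G (tapp s d)).
  - exfalso. apply Hn. intro x. destruct (Hna (inhabits x)).
Qed.

End Arrow.

Section Product.

Variables a b : cty.

Lemma definable_prod : definable a -> definable b -> definable (cprod a b).
Proof.
  intros Da Db [x y] G. destruct (Da x G) as [d Hd], (Db y G) as [d' Hd'].
  exists (tpair d d'). intro rho. simpl. rewrite Hd, Hd'. reflexivity.
Qed.

Lemma testable_prod : testable a -> testable b -> testable (cprod a b).
Proof.
  intros Ta Tb [x y] G. set (P := tprod (emb a) (emb b)).
  destruct (Ta x (P :: G)) as [e He], (Tb y (P :: G)) as [e' He'].
  exists (tlam (tand (tapp e (tproj1 (tvar (vz G P)))) (tapp e' (tproj2 (tvar (vz G P)))))).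
  intros rho p. cbn [eval]. rewrite eval_tand_true. simpl. rewrite He, He'. split.
  - intros [<- <-]. reflexivity.
  - intro Hp. injection Hp. auto.
Qed.

Lemma absurd_definable_prod :
  absurd_definable a -> absurd_definable b -> absurd_definable (cprod a b).
Proof.
  intros Ea Eb Hn G s. destruct (classic (inhabited (csem a))) as [[x]|Hna].
  - exact (Eb (fun y => Hn (x, y)) G (tproj2 s)).
  - exact (Ea (fun x => Hna (inhabits x)) G (tproj1 s)).
Qed.

End Product.

Section Sum.

Variables a b : cty.

Lemma definable_sum : definable a -> definable b -> definable (csum a b).
Proof.
  intros Da Db [x|y] G.
  - destruct (Da x G) as [d Hd]. exists (tinl _ d). intro rho. simpl. rewrite Hd. reflexivity.
  - destruct (Db y G) as [d Hd]. exists (tinr _ d). intro rho. simpl. rewrite Hd. reflexivity.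
Qed.

Lemma testable_sum : testable a -> testable b -> testable (csum a b).
Proof.
  intros Ta Tb s G. set (S := tsum (emb a) (emb b)). destruct s as [x|y].
  - destruct (Ta x (emb a :: S :: G)) as [e He].
    exists (tlam (tcase (tvar (vz G S)) (tapp e (tvar (vz _ _))) (tfalse _))).
    intros rho [y|y]; simpl.
    + rewrite He. split; [intros <- | intro Hy; injection Hy]; auto.
    + split; discriminate.
  - destruct (Tb y (emb b :: S :: G)) as [e He].
    exists (tlam (tcase (tvar (vz G S)) (tfalse _) (tapp e (tvar (vz _ _))))).
    intros rho [x|x]; simpl.
    + split; discriminate.
    + rewrite He. split; [intros <- | intro Hx; injection Hx]; auto.
Qed.

Lemma absurd_definable_sum :
  absurd_definable a -> absurd_definable b -> absurd_definable (csum a b).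
Proof.
  intros Ea Eb Hn G s.
  destruct (Ea (fun x => Hn (inl x)) (emb a :: G) (tvar (vz _ _))) as [z].
  destruct (Eb (fun y => Hn (inr y)) (emb b :: G) (tvar (vz _ _))) as [z'].
  exact (inhabits (tcase s z z')).
Qed.

End Sum.

Theorem definability c : definable c /\ testable c /\ absurd_definable c.
Proof.
  induction c as [a [Da [Ta Ea]] b [Db [Tb Eb]] | a [Da [Ta Ea]] b [Db [Tb Eb]] | |
                  a [Da [Ta Ea]] b [Db [Tb Eb]] |].
  - pose proof (csem_finite a) as Fa.
    auto using definable_arr, testable_arr, absurd_definable_arr.
  - auto using definable_prod, testable_prod, absurd_definable_prod.
  - split; [|split].
    + intros [] G. exists (ttt G). reflexivity.
    + intros [] G. exists (tlam (ttrue _)). intros rho []. split; reflexivity.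
    + intro Hn. destruct (Hn tt).
  - auto using definable_sum, testable_sum, absurd_definable_sum.
  - split; [|split].
    + intros [].
    + intros [].
    + intros _ G s. exact (inhabits s).
Qed.

Definition empty_valuation : valuation N nil := fun B v => False_rect _ (var_nil_elim v).

Lemma closing_context {M G} (rho : valuation M G) {H K B} (c : hctx H K (map (mty M) G) B) :
  exists (c' : hctx H K nil B) (rho' : valuation N (map (mty M) G)),
    encodes N rho rho' /\ forall t, eval N (plug c' t) empty_valuation = eval N (plug c t) rho'.
Proof.
  revert B c. induction G as [|A G IH]; intros B c.
  - exists c, empty_valuation. split; [intros ? v; destruct (var_nil_elim v) | reflexivity].
  - destruct (proj1 (definability (tinst M A)) (rho A (vz G A)) (map (mty M) G)) as [d Hd].
    destruct (IH (fun B v => rho B (vs A v)) B (cappl (clam c) d)) as [c' [rho' [Hrho' Hc']]].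
    exists c', (vext rho' (eval N d rho')). split.
    + red. apply var_cons_ind; [apply Hd | apply Hrho'].
    + intro t. rewrite Hc'. reflexivity.
Qed.

End Definability.

Theorem mainTheorem6 (G : tctx) (A : ty) (t u : tm G A) :
  ctx_equiv t u -> sem_equiv t u.
Proof.
  intros Hctx M rho.
  destruct (proj1 (proj2 (definability M (tinst M A))) (eval M t rho) (map (mty M) G))
    as [e He].
  destruct (closing_context M rho (cappr e (chole _ _))) as [C [rho' [Hrho' HC]]].
  pose proof (beq_sound (Hctx M C) M (empty_valuation M)) as Hsound.
  rewrite !HC in Hsound.
  symmetry. apply (test_separates M _ (He rho')).
  rewrite <- (eval_mtm M t rho rho' Hrho'), <- (eval_mtm M u rho rho' Hrho').
  exact (eq_sym Hsound).
Qed.
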